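(* Let $r\ge 3$ and $n\ge\frac{(r-1)(2r+1)}{2}$, and let $\mathcal{H}$ be an $n$-vertex $r$-graph with $\delta_{r-1}^{+}(\mathcal{H})>\frac{2n}{2r+1}$. Let $V_1,\ldots,V_r\subseteq V(\mathcal{H})$ be pairwise disjoint sets, each independent in $\mathcal{H}$, with $|V_i|>\frac{2n}{2r+1}$ for all $i\in[r]$, and let $Z=V(\mathcal{H})\setminus(V_1\cup\cdots\cup V_r)$. Let $v\in Z$ and let $v_1\in V_1\cap N_{\mathcal{H}}(v)$. Then there exists an edge $e\in\mathcal{H}$ with $\{v,v_1\}\subseteq e$ and $|e\cap(V_2\cup\cdots\cup V_r)|\ge r-2$.
   Context: An $r$-graph $\mathcal{H}$ is a collection of $r$-subsets (edges) of a finite vertex set $V(\mathcal{H})$. The shadow is $\partial\mathcal{H}=\{e\in\binom{V(\mathcal{H})}{r-1}\colon e\subseteq E \text{ for some } E\in\mathcal{H}\}$. For $e\in\partial\mathcal{H}$, $N_{\mathcal{H}}(e)=\{u\in V(\mathcal{H})\colon e\cup\{u\}\in\mathcal{H}\}$. For a vertex $v$, $N_{\mathcal{H}}(v)=\{u\in V(\mathcal{H})\setminus\{v\}\colon \{u,v\}\subseteq E\text{ for some } E\in\mathcal{H}\}$. The minimum positive codegree is $\delta_{r-1}^{+}(\mathcal{H})=\min\{|N_{\mathcal{H}}(e)|\colon e\in\partial\mathcal{H}\}$. A set $I\subseteq V(\mathcal{H})$ is independent in $\mathcal{H}$ if every edge contains at most one vertex of $I$. *)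

(* Vertex set V(H) is the finType T; an r-graph is a set of r-subsets of T. *)
From mathcomp Require Import all_boot.
Set Implicit Arguments. Unset Strict Implicit. Unset Printing Implicit Defensive.

Section Hyper.
Variable T : finType.

Definition is_rgraph (r : nat) (H : {set {set T}}) : Prop :=
  forall E, E \in H -> #|E| = r.

Definition shadow (r : nat) (H : {set {set T}}) : {set {set T}} :=
  [set e : {set T} | (#|e| == r.-1) && [exists E in H, e \subset E]].

Definition codeg_nbhd (H : {set {set T}}) (e : {set T}) : {set T} :=
  [set u | (u |: e) \in H].

Definition vert_nbhd (H : {set {set T}}) (v : T) : {set T} :=
  [set u | (u != v) && [exists E in H, (u \in E) && (v \in E)]].

(* delta^+_{r-1}(H) > c, i.e. every shadow set has codegree neighbourhood larger
   than c; here c = num/den, stated without division as num < den * |N(e)|. *)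
Definition min_pos_codeg_gt (r : nat) (H : {set {set T}}) (num den : nat) : Prop :=
  forall e, e \in shadow r H -> num < den * #|codeg_nbhd H e|.

Definition independent (H : {set {set T}}) (I : {set T}) : Prop :=
  forall E, E \in H -> #|E :&: I| <= 1.
End Hyper.

(* Take an edge e through v and v1 meeting W := V_2 u ... u V_r in as many
   vertices as possible.  If |e n W| < r - 2, then e has a vertex z outside
   W u V_1 u {v}.  Every u in the codegree neighbourhood of e \ z lies outside
   V_1 (e \ z already contains v1 and V_1 is independent) and outside W
   (otherwise (e \ z) + u would beat e), i.e. it lies in the remainder Z.  But
   the parts V_i are so large that |Z| < n/(2r+1), contradicting the minimum
   positive codegree condition. *)
From mathcomp Require Import all_boot zify.

Set Implicit Arguments.
Unset Strict Implicit.
Unset Printing Implicit Defensive.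

Section BigcupSeq.
Variables (T : finType) (I : eqType) (F : I -> {set T}).

Lemma bigcup_seqP (s : seq I) x :
  reflect (exists2 i, i \in s & x \in F i) (x \in \bigcup_(i <- s) F i).
Proof.
elim: s => [|i s IHs]; first by rewrite big_nil inE; constructor => -[].
rewrite big_cons in_setU; apply: (iffP orP) => [[xFi|/IHs[j js xFj]]|[j]].
- by exists i; rewrite ?mem_head.
- by exists j; rewrite // in_cons js orbT.
- by rewrite in_cons => /orP[/eqP->|js xFj]; [left|right; apply/IHs; exists j].
Qed.

Lemma card_bigcup_seq (s : seq I) :
  uniq s -> {in s &, forall i j, i != j -> [disjoint F i & F j]} ->
  #|\bigcup_(i <- s) F i| = \sum_(i <- s) #|F i|.
Proof.
elim: s => [|i s IHs]; first by rewrite !big_nil cards0.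
rewrite cons_uniq => /andP[i_notin_s s_uniq] disF.
have disFs : {in s &, forall j k, j != k -> [disjoint F j & F k]}.
  by move=> j k js ks; apply: disF; rewrite in_cons ?js ?ks orbT.
rewrite !big_cons -IHs //; apply/eqP; rewrite (leq_card_setU _ _).2.
rewrite disjoints_subset; apply/subsetP => x xFi; rewrite inE.
apply/bigcup_seqP => -[j js xFj].
have ij : i != j by apply: contraNneq i_notin_s => ->.
have js' : j \in i :: s by rewrite in_cons js orbT.
have := disF i j (mem_head i s) js' ij.
by rewrite disjoints_subset => /subsetP/(_ x xFi); rewrite inE xFj.
Qed.

End BigcupSeq.

Section SetCounting.
Variable T : finType.
Implicit Types e A B : {set T}.

Lemma card_setIUr e A B : #|e :&: (A :|: B)| <= #|e :&: A| + #|e :&: B|.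
Proof. by rewrite setIUr leq_card_setU. Qed.

Lemma card_setI_lt_notin e A : #|e :&: A| < #|e| -> exists2 z, z \in e & z \notin A.
Proof.
by move=> eA_small; apply/subsetPn/negP => /setIidPl eA; rewrite eA ltnn in eA_small.
Qed.

End SetCounting.

Lemma card_bigcup_nat (T : finType) (V : nat -> {set T}) a b :
  (forall i j, a <= i < b -> a <= j < b -> i != j -> [disjoint V i & V j]) ->
  #|\bigcup_(a <= i < b) V i| = \sum_(a <= i < b) #|V i|.
Proof.
move=> disV; apply: card_bigcup_seq; first exact: iota_uniq.
by move=> i j; rewrite !mem_index_iota; apply: disV.
Qed.

Lemma card_outside_large_parts (T : finType) (r : nat) (V : nat -> {set T}) :
  0 < r ->
  (forall i j, 1 <= i <= r -> 1 <= j <= r -> i != j -> [disjoint V i & V j]) ->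
  (forall i, 1 <= i <= r -> 2 * #|T| < (2 * r + 1) * #|V i|) ->
  (2 * r + 1) * #|~: \bigcup_(1 <= i < r.+1) V i| < #|T|.
Proof.
move=> r_gt0 disV bigV.
have cardU : #|\bigcup_(1 <= i < r.+1) V i| = \sum_(1 <= i < r.+1) #|V i|.
  by apply: card_bigcup_nat => i j ir jr; apply: disV; lia.
have sumV : \sum_(1 <= i < r.+1) (2 * #|T|).+1
            <= \sum_(1 <= i < r.+1) (2 * r + 1) * #|V i|.
  by rewrite big_nat [X in _ <= X]big_nat; apply: leq_sum => i ir; apply: bigV; lia.
rewrite sum_nat_const_nat subn1 -big_distrr /= -cardU in sumV.
have := congr1 (muln (2 * r + 1)) (cardsC (\bigcup_(1 <= i < r.+1) V i)).
rewrite mulnDr; move: sumV r_gt0.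
move: #|T| #|\bigcup_(1 <= i < r.+1) V i| #|~: _| => n u z; nia.
Qed.

Section CodegreeNeighbourhood.
Variables (T : finType) (r : nat) (H : {set {set T}}).
Hypothesis H_rgraph : is_rgraph r H.

Lemma shadow_setD1 e z : e \in H -> z \in e -> e :\ z \in shadow r H.
Proof.
move=> eH ze; rewrite inE -(subn1 r) -(H_rgraph eH) (cardsD1 z e) ze add1n subn1.
by rewrite eqxx; apply/existsP; exists e; rewrite eH subD1set.
Qed.

Lemma codeg_nbhd_notin (e : {set T}) u :
  #|e| < r -> u \in codeg_nbhd H e -> u \notin e.
Proof.
move=> e_small; rewrite inE; apply: contraTN => ue.
rewrite (setUidPr _) ?sub1set //; apply/negP => /H_rgraph card_e.
by rewrite card_e ltnn in e_small.
Qed.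

Lemma codeg_nbhd_indep_disjoint (e I : {set T}) x :
  #|e| < r -> independent H I -> x \in e :&: I ->
  [disjoint codeg_nbhd H e & I].
Proof.
move=> e_small indI /setIP[xe xI].
rewrite disjoints_subset; apply/subsetP => u uN; rewrite inE; apply/negP => uI.
have ux : u != x by apply: contraNneq (codeg_nbhd_notin e_small uN) => ->.
have pair_sub : [set u; x] \subset (u |: e) :&: I.
  by apply/subsetP => y /set2P[]->; rewrite !inE ?eqxx ?xe ?orbT.
have uE : u |: e \in H by rewrite inE in uN.
have := leq_trans (subset_leq_card pair_sub) (indI _ uE).
by rewrite cards2 ux.
Qed.

Lemma codeg_nbhd_maximal_disjoint (W S e : {set T}) z :
  e \in H -> S \subset e ->
  (forall f, f \in H -> S \subset f -> #|f :&: W| <= #|e :&: W|) ->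
  z \in e -> z \notin W -> z \notin S ->
  [disjoint codeg_nbhd H (e :\ z) & W].
Proof.
move=> eH Se e_max ze zW zS.
rewrite disjoints_subset; apply/subsetP => u uN; rewrite inE; apply/negP => uW.
have e'_small : #|e :\ z| < r by rewrite -(H_rgraph eH) proper_card ?properD1.
have ue : u \notin e.
  have := codeg_nbhd_notin e'_small uN; rewrite !inE negb_and negbK.
  by case/orP=> // /eqP uz; rewrite -uz uW in zW.
have Sf : S \subset u |: (e :\ z).
  by apply: subset_trans (subsetU1 u _); rewrite subsetD1 Se.
have fW : (u |: (e :\ z)) :&: W = u |: (e :&: W).
  apply/setP => y; rewrite !inE.
  case: (eqVneq y u) => [->|_]; first by rewrite uW.
  by case: (eqVneq y z) => [->|]; rewrite ?(negbTE zW) ?andbF.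
have fH : u |: (e :\ z) \in H by rewrite inE in uN.
have := e_max _ fH Sf.
by rewrite fW cardsU1 inE (negbTE ue) add1n ltnn.
Qed.

End CodegreeNeighbourhood.

Theorem claim2p6 (T : finType) (r : nat) (H : {set {set T}})
    (V : nat -> {set T}) (v v1 : T) :
  3 <= r ->
  (r.-1 * (2 * r + 1) <= 2 * #|T|) ->
  is_rgraph r H ->
  min_pos_codeg_gt r H (2 * #|T|) (2 * r + 1) ->
  (forall i j, 1 <= i <= r -> 1 <= j <= r -> i != j -> [disjoint V i & V j]) ->
  (forall i, 1 <= i <= r -> independent H (V i)) ->
  (forall i, 1 <= i <= r -> 2 * #|T| < (2 * r + 1) * #|V i|) ->
  v \in ~: (\bigcup_(1 <= i < r.+1) V i) ->
  v1 \in V 1 :&: vert_nbhd H v ->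
  exists2 e, e \in H &
    [&& v \in e, v1 \in e & r - 2 <= #|e :&: \bigcup_(2 <= i < r.+1) V i|].
Proof.
move=> r_ge3 _ H_rgraph codeg disV indV bigV _ /setIP[v1V1].
rewrite inE => /andP[_ /existsP[e0 /and3P[e0H v1e0 ve0]]].
set W := \bigcup_(2 <= i < r.+1) V i.
set S := [set v; v1].
have r_gt0 : 0 < r by apply: leq_ltn_trans r_ge3.
have indV1 : independent H (V 1) by apply: indV; rewrite leqnn.
have Se0 : S \subset e0 by apply/subsetP => x /set2P[]->.
have [e /andP[eH Se] e_max] :=
  @arg_maxnP _ e0 (fun f => (f \in H) && (S \subset f)) (fun f => #|f :&: W|)
    ltac:(by rewrite /= e0H Se0).
have {}e_max f : f \in H -> S \subset f -> #|f :&: W| <= #|e :&: W|.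
  by move=> fH Sf; apply: e_max; rewrite fH Sf.
have [ve v1e] : v \in e /\ v1 \in e.
  by split; apply: (subsetP Se); rewrite !inE eqxx ?orbT.
have [|few] := leqP (r - 2) #|e :&: W|; first by exists e => //; rewrite ve v1e.
have [z ze] : exists2 z, z \in e & z \notin W :|: V 1 :|: [set v].
  apply: card_setI_lt_notin; rewrite (H_rgraph _ eH).
  have ev : #|e :&: [set v]| <= 1 by rewrite -(cards1 v) subset_leq_card ?subsetIr.
  have := leq_trans (card_setIUr _ _ _) (leq_add (card_setIUr e W (V 1)) ev).
  have := indV1 e eH; lia.
rewrite !inE negb_or => /andP[/norP[zW zV1] zv].
have zS : z \notin S by rewrite !inE negb_or zv; apply: contraNneq zV1 => ->.
have e'_small : #|e :\ z| < r by rewrite -(H_rgraph _ eH) proper_card ?properD1.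
have v1e' : v1 \in (e :\ z) :&: V 1.
  by rewrite !inE v1e v1V1 !andbT; apply: contraNneq zV1 => <-.
have N_out : codeg_nbhd H (e :\ z) \subset ~: \bigcup_(1 <= i < r.+1) V i.
  rewrite big_ltn ?ltnS //; apply/subsetP => u uN.
  rewrite in_setC in_setU negb_or.
  have V1_free := codeg_nbhd_indep_disjoint H_rgraph e'_small indV1 v1e'.
  rewrite (disjointFr V1_free uN).
  have W_free := codeg_nbhd_maximal_disjoint H_rgraph eH Se e_max ze zW zS.
  by rewrite (disjointFr W_free uN).
have := ltn_trans (codeg _ (shadow_setD1 H_rgraph eH ze)) (leq_ltn_trans
  (leq_mul (leqnn _) (subset_leq_card N_out))
  (card_outside_large_parts r_gt0 disV bigV)).
by rewrite mul2n -addnn ltnNge leq_addl.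
Qed.
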